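(* Let $Y\sim N(\theta,\sigma^2)$ with $\sigma>0$, let $\tau\ge1$, and let $\theta_0=E_0[(Y^2-\sigma^2)\mathbb 1(Y^2\le\sigma^2\tau)]$, where $E_0$ denotes expectation under $\theta=0$. Then $$\big|E[(Y^2-\sigma^2)\mathbb 1(Y^2\le\sigma^2\tau)]-\theta_0\big|\le\min\{\theta^2,3\sigma^2\tau\}.$$ *)

From Stdlib Require Import Reals.
Open Scope R_scope.

Definition normal_pdf (theta sigma y : R) : R :=
  / (sigma * sqrt (2 * PI)) * exp (- (y - theta) ^ 2 / (2 * sigma ^ 2)).

(* Integrand of E_theta[(Y^2 - sigma^2) 1(Y^2 <= sigma^2 tau)]; the indicator
   is realised by integrating over [-sigma*sqrt tau, sigma*sqrt tau]. *)
Definition trunc_integrand (theta sigma : R) (y : R) : R :=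
  (y ^ 2 - sigma ^ 2) * normal_pdf theta sigma y.

(* Write [a = sigma sqrt tau] and [M t] for the truncated moment
   [E_t[(Y^2 - sigma^2) 1(|Y| <= a)]].  Integrating by parts gives
   [M t = t^2 P t + B t], where [P t = P_t(|Y| <= a)] lies in [[0, 1]] and [B]
   is a boundary term in the Gaussian density [g].  Both [t^2 - M t] and
   [t^2 + B t] have a derivative with the sign of [t], so both are smallest at
   [t = 0]: the first because [P <= 1] and [g (a - t) >= g (-a - t)] exactly
   when [t >= 0], the second by the elementary estimate
   [(sigma^2 + a^2 - t^2) (g (a - t) - g (-a - t)) <= 2 t] for [t >= 0].
   As [P >= 0], this gives [|M theta - M 0| <= theta^2].  The other bound holds
   because [M] takes its values in [[-sigma^2, a^2 - sigma^2]]. *)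

From Pilot Require Import Defs.
From Stdlib Require Import Reals Lra Psatz.
From HB Require structures.
From mathcomp Require all_boot all_order all_algebra all_classical all_reals all_analysis.
From mathcomp Require Rstruct Rstruct_topology measurable_realfun normal_distribution.

(* [P <= 1] needs the total mass of the normal density, taken from
   MathComp-Analysis. *)
Module NormalMass.
Import structures.
From mathcomp Require Import all_boot all_order all_algebra.
From mathcomp Require Import all_classical all_reals all_analysis.
From mathcomp Require Import Rstruct Rstruct_topology measurable_realfun normal_distribution.
Import Order.TTheory GRing.Theory Num.Theory.
Import numFieldNormedType.Exports.
Local Open Scope classical_set_scope.
Local Open Scope ring_scope.

Lemma is_derive_derivable_pt_lim {F : R -> R} {x l : R} : derivable_pt_lim F x l ->
  is_derive (x : R^o) 1 (F : R^o -> R^o) l.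
Proof.
move=> Fd.
suff H : (fun h => h^-1 *: (((F : R^o -> R^o) \o shift x) (h *: (1:R^o)) - F x))
    @ (0:R^o)^' --> (l:R^o).
  by apply: DeriveDef; [apply/cvg_ex; exists l|apply: cvg_lim].
apply/cvgrPdist_lt => e /RltP e0.
have [d Hd] := Fd e e0.
apply/nbhs_ballP; exists (pos d); first by apply/RltP; exact: cond_pos.
move=> h /= hb /eqP hn.
rewrite /ball /= sub0r normrN in hb.
have := Hd h hn; rewrite RabsE => /(_ (RltP hb)).
rewrite RabsE => /RltP; rewrite distrC.
congr (`|_ - _| < _).
rewrite /= /shift /= RdivE mulrC; congr (_ * (F _ - _)).
rewrite addrC; congr (_ + _); exact: (esym (mulr1 h)).
Qed.

Lemma continuous_derivable_pt_lim {F : R -> R} {x l : R} : derivable_pt_lim F x l ->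
  {for x, continuous F}.
Proof.
by move=> Fd; apply/continuity_pt_cvg/derivable_continuous_pt; exists l.
Qed.

(* Both constants equal four times the arctangent of 1. *)
Lemma RPIE : PI = pi.
Proof.
pose f x : R := (1 + x ^+ 2)^-1.
have cf : {within `[0%R, 1%R], continuous f}.
  apply: continuous_subspaceT => x.
  apply: cvgV; first by rewrite gt_eqF // ltr_pwDl // sqr_ge0.
  by apply: cvgD; [exact: cvg_cst|exact: exprn_continuous].
have datan x : derivable_pt_lim Ratan.atan x (f x).
  by have := derivable_pt_lim_atan x; rewrite /f RinvE RpowE.
have FTC_atan := @continuous_FTC2 R f atan 0 1 ltr01 cf.
have FTC_Ratan := @continuous_FTC2 R f Ratan.atan 0 1 ltr01 cf.
have e : Ratan.atan 1 - Ratan.atan 0 = atan 1 - atan 0.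
  apply: EFin_inj; rewrite !EFinB -FTC_Ratan ?FTC_atan //.
  - split.
    + by move=> x _; exact: derivable_atan.
    + by apply: cvg_at_right_filter; exact: continuous_atan.
    + by apply: cvg_at_left_filter; exact: continuous_atan.
  - by move=> x _; rewrite derive1_atan.
  - split.
    + by move=> x _; have [] := is_derive_derivable_pt_lim (datan x).
    + exact/cvg_at_right_filter/(continuous_derivable_pt_lim (datan 0)).
    + exact/cvg_at_left_filter/(continuous_derivable_pt_lim (datan 1)).
  - move=> x _; have D := is_derive_derivable_pt_lim (datan x).
    by rewrite derive1E derive_val.
move: e; rewrite atan_1 atan_0 atan1 atan0 !subr0 RdivE.
have -> : (4%coqR : R) = 4%:R by rewrite IZRposE INRE.
move=> e; have : PI / 4%:R * 4%:R = pi / 4%:R * 4%:R by rewrite e.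
by rewrite !mulfVK.
Qed.

Lemma Rnormal_pdfE (m s y : R) : 0 < s ->
  Defs.normal_pdf m s y = normal_pdf m s y.
Proof.
move=> s0; rewrite /normal_pdf gt_eqF // /Defs.normal_pdf.
rewrite /normal_peak /normal_fun RPIE -RexpE !RealsE /=.
congr (_^-1 * expR _); last by rewrite mulr_natl.
by rewrite mulr_natl -mulrnAr [RHS]sqrtrM ?sqr_ge0 // sqrtr_sqr ger0_norm ?ltW.
Qed.

Lemma antiderivative_normal_pdf_incr_le1 (m s c d : R) (F : R -> R) :
  (0 < s)%coqR -> (c < d)%coqR ->
  (forall y, (c <= y <= d)%coqR -> derivable_pt_lim F y (Defs.normal_pdf m s y)) ->
  (F d - F c <= 1)%coqR.
Proof.
move=> /RltP s0 /RltP cd Fd; apply/RleP.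
have Fd' y : c <= y <= d -> derivable_pt_lim F y (normal_pdf m s y).
  by move=> /andP[/RleP yc /RleP yd]; rewrite -Rnormal_pdfE //; exact: Fd.
have cont : {within `[c, d], continuous (normal_pdf m s)}.
  by apply: continuous_subspaceT; apply: continuous_normal_pdf; rewrite gt_eqF.
have derF : derivable_oo_LRcontinuous (F : R -> R^o) c d.
  split.
  - move=> x; rewrite in_itv /= => /andP[xc xd].
    have xcd : c <= x <= d by rewrite (ltW xc) (ltW xd).
    by have [] := is_derive_derivable_pt_lim (Fd' x xcd).
  - apply/cvg_at_right_filter/(continuous_derivable_pt_lim (Fd' c _)).
    by rewrite lexx ltW.
  - apply/cvg_at_left_filter/(continuous_derivable_pt_lim (Fd' d _)).
    by rewrite lexx ltW.
have dF : {in `]c, d[, (F : R -> R^o)^`()%classic =1 normal_pdf m s}.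
  move=> x; rewrite in_itv /= => /andP[xc xd].
  have xcd : c <= x <= d by rewrite (ltW xc) (ltW xd).
  have D := is_derive_derivable_pt_lim (Fd' x xcd).
  by rewrite derive1E derive_val.
have := @continuous_FTC2 R (normal_pdf m s) F c d cd cont derF dF.
rewrite -lee_fin EFinB => <-; rewrite -(integral_normal_pdf m s).
apply: ge0_subset_integral => //.
- by apply/measurable_EFinP; exact: measurable_normal_pdf.
- by move=> x _; rewrite lee_fin normal_pdf_ge0.
Qed.

End NormalMass.

From Coquelicot Require Import Coquelicot.
Open Scope R_scope.

Lemma min_at_0_of_deriv_sign (f f' : R -> R) x :
  (forall t, is_derive f t (f' t)) -> (forall t, 0 <= t * f' t) -> f 0 <= f x.
Proof.
intros Hd Hsign.
assert (Hd' : forall t, derivable_pt_lim f t (f' t))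
  by (intros t; apply is_derive_Reals, Hd).
destruct (Rtotal_order 0 x) as [Hx | [<- | Hx]].
- destruct (MVT_cor2 f f' 0 x Hx (fun t _ => Hd' t)) as [c [E Hc]].
  specialize (Hsign c). nra.
- lra.
- destruct (MVT_cor2 f f' x 0 Hx (fun t _ => Hd' t)) as [c [E Hc]].
  specialize (Hsign c). nra.
Qed.

Lemma exp_ge_cubic z : 0 <= z -> 1 + z + z ^ 2 / 2 + z ^ 3 / 6 <= exp z.
Proof. intros Hz. generalize (exp_ge_taylor z 3 Hz). simpl. lra. Qed.

Definition kern (y : R) : R := exp (- y ^ 2 / 2).

Lemma kern_pos y : 0 < kern y.
Proof. apply exp_pos. Qed.

Lemma kern_le x y : x ^ 2 <= y ^ 2 -> kern y <= kern x.
Proof.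
intros H. unfold kern. destruct (Rle_lt_or_eq_dec _ _ H) as [Hlt | ->].
- left. apply exp_increasing. lra.
- lra.
Qed.

Lemma is_derive_kern y : is_derive kern y (- y * kern y).
Proof.
unfold kern. auto_derive; auto.
replace (- (y * (y * 1)) * / 2) with (- y ^ 2 / 2) by field. field.
Qed.

Lemma kern_diff_mvt d e : 0 <= d <= e ->
  exists c, d <= c /\ kern d - kern e = c * kern c * (e - d).
Proof.
intros Hde. destruct (Req_dec d e) as [<- | Hne].
- exists d. split; [lra | ring].
- destruct (MVT_cor2 kern (fun c => - c * kern c) d e ltac:(lra)
    (fun c _ => proj1 (is_derive_Reals _ _ _) (is_derive_kern c))) as [c [E Hc]].
  exists c. split; lra.
Qed.

Lemma kern_mul_exp y : kern y * exp (y ^ 2 / 2) = 1.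
Proof.
unfold kern. rewrite <- exp_plus.
replace (- y ^ 2 / 2 + y ^ 2 / 2) with 0 by field. apply exp_0.
Qed.

Lemma le_kern_of_le_exp k p y : p <= k * exp (y ^ 2 / 2) -> p * kern y <= k.
Proof.
intros H. pose proof (kern_pos y) as Hk. pose proof (kern_mul_exp y) as E.
replace k with (k * exp (y ^ 2 / 2) * kern y)
  by (rewrite Rmult_assoc, (Rmult_comm _ (kern y)), E; ring).
apply Rmult_le_compat_r; lra.
Qed.

Lemma mul_kern_le y : 0 <= y -> y * kern y <= 7 / 10.
Proof.
intros Hy. apply le_kern_of_le_exp.
pose proof (exp_ge_cubic (y ^ 2 / 2) ltac:(nra)).
pose proof (pow2_ge_0 (y ^ 2 - 1)). pose proof (pow2_ge_0 (y - 20 / 21)).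
pose proof (pow2_ge_0 (y ^ 3)). nra.
Qed.

(* The squares below form a sum-of-squares certificate for the polynomial
   inequality obtained from [exp_ge_cubic]. *)
Lemma cubic_kern_le y : (1 + y ^ 2) * y * kern y <= 17 / 10.
Proof.
apply le_kern_of_le_exp.
pose proof (exp_ge_cubic (y ^ 2 / 2) ltac:(nra)).
pose proof (pow2_ge_0 (1 - 5/17*y - 3/85*y^2 - 5/68*y^3)).
pose proof (pow2_ge_0 (y - 1335/2798*y^2 - 829/13990*y^3)).
pose proof (pow2_ge_0 (y^2 - 77445/131618*y^3)).
pose proof (pow2_ge_0 (y^3)). nra.
Qed.

Lemma kern_even y : kern (- y) = kern y.
Proof. unfold kern. replace ((- y) ^ 2) with (y ^ 2) by ring. reflexivity. Qed.

Lemma kern_shift_diff_small x t : 0 <= x <= t ->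
  (1 + x ^ 2 - t ^ 2) * (kern (x - t) - kern (x + t)) <= 7 / 5 * t.
Proof.
intros Hxt.
replace (x - t) with (- (t - x)) by ring. rewrite kern_even.
destruct (kern_diff_mvt (t - x) (x + t) ltac:(lra)) as [c [Hc ->]].
pose proof (mul_kern_le c ltac:(lra)).
pose proof (Rmult_le_pos _ _ (ltac:(lra) : 0 <= c) (Rlt_le _ _ (kern_pos c))).
set (A := c * kern c) in *.
replace (x + t - (t - x)) with (2 * x) by ring.
assert (0 <= A * (2 * x) <= 7 / 5 * t) by nra.
assert (1 + x ^ 2 - t ^ 2 <= 1) by nra.
destruct (Rle_dec (1 + x ^ 2 - t ^ 2) 0).
- assert ((1 + x ^ 2 - t ^ 2) * (A * (2 * x)) <= 0) by nra. lra.
- assert ((1 + x ^ 2 - t ^ 2) * (A * (2 * x)) <= 1 * (A * (2 * x)))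
    by (apply Rmult_le_compat_r; lra).
  lra.
Qed.

Lemma kern_shift_diff_large x t : 0 <= t <= x ->
  (1 + x ^ 2 - t ^ 2) * (kern (x - t) - kern (x + t)) <= 24 / 5 * t.
Proof.
intros Htx.
assert (Hsplit : 1 + x ^ 2 - t ^ 2 = (1 + (x - t) ^ 2) + 2 * t * (x - t)) by ring.
assert (Hdiff : kern (x - t) - kern (x + t) <= kern (x - t)) by (pose proof (kern_pos (x + t)); lra).
pose proof (mul_kern_le (x - t) ltac:(lra)).
destruct (kern_diff_mvt (x - t) (x + t) ltac:(lra)) as [c [Hc E]].
pose proof (cubic_kern_le c).
pose proof (Rmult_le_pos _ _ (ltac:(lra) : 0 <= c) (Rlt_le _ _ (kern_pos c))).
set (A := c * kern c) in *.
assert (HA : (1 + (x - t) ^ 2) * A <= 17 / 10).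
{ apply Rle_trans with ((1 + c ^ 2) * A); [|unfold A; rewrite <- Rmult_assoc; lra].
  apply Rmult_le_compat_r; nra. }
rewrite Hsplit, Rmult_plus_distr_r.
assert ((1 + (x - t) ^ 2) * (kern (x - t) - kern (x + t)) <= 17 / 5 * t).
{ rewrite E. replace (x + t - (x - t)) with (2 * t) by ring. nra. }
assert (2 * t * (x - t) * (kern (x - t) - kern (x + t)) <= 7 / 5 * t).
{ apply Rle_trans with (2 * t * ((x - t) * kern (x - t))); [|nra].
  rewrite <- Rmult_assoc. apply Rmult_le_compat_l; nra. }
lra.
Qed.

Lemma kern_shift_diff_le x t : 0 <= x -> 0 <= t ->
  (1 + x ^ 2 - t ^ 2) * (kern (x - t) - kern (x + t)) <= 24 / 5 * t.
Proof.
intros Hx Ht. destruct (Rle_dec x t).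
- pose proof (kern_shift_diff_small x t ltac:(lra)). lra.
- apply kern_shift_diff_large. lra.
Qed.

Definition gauss (s x : R) : R := / (s * sqrt (2 * PI)) * exp (- x ^ 2 / (2 * s ^ 2)).

Lemma normal_pdf_gauss t s y : normal_pdf t s y = gauss s (y - t).
Proof. reflexivity. Qed.

Lemma sqrt_2PI_ge : 12 / 5 <= sqrt (2 * PI).
Proof.
pose proof PI2_3_2.
rewrite <- (sqrt_pow2 (12 / 5)) by lra.
apply sqrt_le_1_alt. lra.
Qed.

Lemma gauss_kern s x : 0 < s -> gauss s x = / (s * sqrt (2 * PI)) * kern (x / s).
Proof.
intros Hs. unfold gauss, kern.
replace (- (x / s) ^ 2 / 2) with (- x ^ 2 / (2 * s ^ 2)) by (field; lra).
reflexivity.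
Qed.

Lemma gauss_pos s x : 0 < s -> 0 < gauss s x.
Proof.
intros Hs. pose proof sqrt_2PI_ge. unfold gauss.
apply Rmult_lt_0_compat; [apply Rinv_0_lt_compat; nra | apply exp_pos].
Qed.

Lemma gauss_even s x : gauss s (- x) = gauss s x.
Proof. unfold gauss. replace ((- x) ^ 2) with (x ^ 2) by ring. reflexivity. Qed.

Lemma gauss_le s x y : 0 < s -> x ^ 2 <= y ^ 2 -> gauss s y <= gauss s x.
Proof.
intros Hs H. pose proof sqrt_2PI_ge. rewrite !(gauss_kern s) by lra.
apply Rmult_le_compat_l; [left; apply Rinv_0_lt_compat; nra|].
apply kern_le. unfold Rdiv. rewrite !Rpow_mult_distr.
apply Rmult_le_compat_r; [apply pow2_ge_0 | lra].
Qed.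

Lemma continuous_gauss s x : continuous (gauss s) x.
Proof. apply (ex_derive_continuous (gauss s)). unfold gauss. auto_derive. easy. Qed.

Lemma continuous_normal_pdf t s y : continuous (normal_pdf t s) y.
Proof. apply (ex_derive_continuous (normal_pdf t s)). unfold normal_pdf. auto_derive. easy. Qed.

Lemma is_derive_gauss s x : 0 < s -> is_derive (gauss s) x (- x / s ^ 2 * gauss s x).
Proof.
intros Hs. pose proof sqrt_2PI_ge. unfold gauss. auto_derive; auto.
replace (- (x * (x * 1)) * / (2 * (s * (s * 1)))) with (- x ^ 2 / (2 * s ^ 2)) by (field; lra).
field. lra.
Qed.

(* Scaling [x = a/s], [u = t/s] reduces this to [kern_shift_diff_le];
   the constant [24/5] is absorbed by [sqrt (2 PI) >= 12/5]. *)
Lemma gauss_shift_diff_le s a t : 0 < s -> 0 <= a -> 0 <= t ->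
  (s ^ 2 + a ^ 2 - t ^ 2) * (gauss s (a - t) - gauss s (- a - t)) <= 2 * t.
Proof.
intros Hs Ha Ht.
pose proof sqrt_2PI_ge.
pose proof (kern_shift_diff_le (a / s) (t / s) ltac:(apply Rdiv_le_0_compat; lra)
  ltac:(apply Rdiv_le_0_compat; lra)) as K.
rewrite !(gauss_kern s) by lra.
replace ((- a - t) / s) with (- (a / s + t / s)) by (field; lra).
replace ((a - t) / s) with (a / s - t / s) by (field; lra).
rewrite kern_even.
set (D := kern (a / s - t / s) - kern (a / s + t / s)) in *.
replace ((s ^ 2 + a ^ 2 - t ^ 2) * (/ (s * sqrt (2 * PI)) * kern (a / s - t / s) -
   / (s * sqrt (2 * PI)) * kern (a / s + t / s)))
  with (s * ((1 + (a / s) ^ 2 - (t / s) ^ 2) * D) / sqrt (2 * PI))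
  by (unfold D; field; lra).
apply Rle_div_l; [lra|].
apply Rle_trans with (s * (24 / 5 * (t / s))); [apply Rmult_le_compat_l; lra|].
replace (s * (24 / 5 * (t / s))) with (24 / 5 * t) by (field; lra).
nra.
Qed.

Lemma gauss_shift_sign s a t : 0 < s -> 0 <= a ->
  0 <= t * (gauss s (a - t) - gauss s (- a - t)).
Proof.
intros Hs Ha. destruct (Rle_dec 0 t).
- assert (gauss s (- a - t) <= gauss s (a - t)) by (apply gauss_le; nra). nra.
- assert (gauss s (a - t) <= gauss s (- a - t)) by (apply gauss_le; nra). nra.
Qed.

Lemma gauss_shift_diff_mul_le s a t : 0 < s -> 0 <= a ->
  t * ((s ^ 2 + a ^ 2 - t ^ 2) * (gauss s (a - t) - gauss s (- a - t))) <= 2 * t ^ 2.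
Proof.
intros Hs Ha. destruct (Rle_dec 0 t).
- pose proof (gauss_shift_diff_le s a t Hs Ha r). nra.
- pose proof (gauss_shift_diff_le s a (- t) Hs Ha ltac:(lra)) as H.
  replace (a - - t) with (- (- a - t)) in H by ring.
  replace (- a - - t) with (- (a - t)) in H by ring.
  rewrite !gauss_even in H. nra.
Qed.

Definition gauss_prim (s x : R) : R := RInt (gauss s) 0 x.

Lemma is_derive_gauss_prim s x : is_derive (gauss_prim s) x (gauss s x).
Proof.
apply (is_derive_RInt (gauss s) (gauss_prim s) 0).
- apply filter_forall. intros y. unfold gauss_prim.
  apply (RInt_correct (V := R_CompleteNormedModule)), ex_RInt_continuous.
  intros z _. apply continuous_gauss.
- apply continuous_gauss.
Qed.

Lemma Derive_gauss_prim s x : Derive (gauss_prim s) x = gauss s x.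
Proof. apply is_derive_unique, is_derive_gauss_prim. Qed.

Lemma ex_derive_gauss_prim s x : ex_derive (gauss_prim s) x.
Proof. eexists. apply is_derive_gauss_prim. Qed.

Lemma Derive_gauss s x : 0 < s -> Derive (gauss s) x = - x / s ^ 2 * gauss s x.
Proof. intros Hs. apply is_derive_unique, is_derive_gauss, Hs. Qed.

Lemma ex_derive_gauss s x : 0 < s -> ex_derive (gauss s) x.
Proof. intros Hs. eexists. apply is_derive_gauss, Hs. Qed.

Definition gauss_mass (s a t : R) : R := gauss_prim s (a - t) - gauss_prim s (- a - t).

Lemma is_derive_gauss_prim_shift s t y :
  is_derive (fun y => gauss_prim s (y - t)) y (normal_pdf t s y).
Proof.
auto_derive; [apply ex_derive_gauss_prim|].
rewrite Derive_gauss_prim, Rmult_1_l. reflexivity.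
Qed.

Lemma is_RInt_normal_pdf s a t : is_RInt (normal_pdf t s) (- a) a (gauss_mass s a t).
Proof.
apply (is_RInt_derive (fun y => gauss_prim s (y - t))).
- intros y _. apply is_derive_gauss_prim_shift.
- intros y _. apply continuous_normal_pdf.
Qed.

Lemma gauss_mass_ge0 s a t : 0 < s -> 0 <= a -> 0 <= gauss_mass s a t.
Proof.
intros Hs Ha.
rewrite <- (is_RInt_unique _ _ _ _ (is_RInt_normal_pdf s a t)).
apply RInt_ge_0; [lra | eexists; apply is_RInt_normal_pdf |].
intros y _. left. apply gauss_pos, Hs.
Qed.

Lemma gauss_mass_le1 s a t : 0 < s -> 0 < a -> gauss_mass s a t <= 1.
Proof.
intros Hs Ha.
apply (NormalMass.antiderivative_normal_pdf_incr_le1 t s (- a) a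
  (fun y => gauss_prim s (y - t)) Hs ltac:(lra)).
intros y _. apply is_derive_Reals, is_derive_gauss_prim_shift.
Qed.

Definition gauss_boundary (s a t : R) : R :=
  s ^ 2 * (t - a) * gauss s (- a - t) - s ^ 2 * (a + t) * gauss s (a - t).

Definition trunc_moment (s a t : R) : R := t ^ 2 * gauss_mass s a t + gauss_boundary s a t.

Lemma is_RInt_trunc_integrand s a t : 0 < s ->
  is_RInt (trunc_integrand t s) (- a) a (trunc_moment s a t).
Proof.
intros Hs.
set (K y := t ^ 2 * gauss_prim s (y - t) - s ^ 2 * (y + t) * gauss s (y - t)).
replace (trunc_moment s a t) with (minus (K a) (K (- a))).
- apply (is_RInt_derive K).
  + intros y _. unfold K, trunc_integrand. rewrite normal_pdf_gauss.
    auto_derive.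
    { repeat split; [apply ex_derive_gauss_prim | apply ex_derive_gauss, Hs]. }
    rewrite Derive_gauss_prim, Derive_gauss by exact Hs.
    change (y + - t) with (y - t). field. lra.
  + intros y _. apply (ex_derive_continuous (trunc_integrand t s)).
    unfold trunc_integrand, normal_pdf. auto_derive. easy.
- unfold K, trunc_moment, gauss_mass, gauss_boundary, minus, plus, opp; simpl.
  replace (- a - t) with (- a + - t) by ring. ring.
Qed.

Lemma is_derive_gauss_boundary s a t : 0 < s ->
  is_derive (gauss_boundary s a) t
    (- ((s ^ 2 + a ^ 2 - t ^ 2) * (gauss s (a - t) - gauss s (- a - t)))).
Proof.
intros Hs. unfold gauss_boundary. auto_derive.
{ repeat split; apply ex_derive_gauss, Hs. }
rewrite !Derive_gauss by exact Hs.
change (- a + - t) with (- a - t). change (a + - t) with (a - t).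
field. lra.
Qed.

Lemma is_derive_trunc_moment s a t : 0 < s ->
  is_derive (trunc_moment s a) t
    (2 * t * gauss_mass s a t - (a ^ 2 + s ^ 2) * (gauss s (a - t) - gauss s (- a - t))).
Proof.
intros Hs. unfold trunc_moment, gauss_mass, gauss_boundary. auto_derive.
{ repeat split; [apply ex_derive_gauss_prim | apply ex_derive_gauss_prim
                | apply ex_derive_gauss, Hs | apply ex_derive_gauss, Hs]. }
rewrite !Derive_gauss_prim, !Derive_gauss by exact Hs.
change (- a + - t) with (- a - t). change (a + - t) with (a - t).
field. lra.
Qed.

Lemma trunc_moment_sub_le s a th : 0 < s -> 0 < a ->
  trunc_moment s a th - trunc_moment s a 0 <= th ^ 2.
Proof.
intros Hs Ha.
enough (0 ^ 2 - trunc_moment s a 0 <= th ^ 2 - trunc_moment s a th) by lra.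
apply (min_at_0_of_deriv_sign (fun t => t ^ 2 - trunc_moment s a t)
  (fun t => 2 * t - (2 * t * gauss_mass s a t
                     - (a ^ 2 + s ^ 2) * (gauss s (a - t) - gauss s (- a - t))))).
- intros t. apply (is_derive_minus (fun t => t ^ 2)); [|apply is_derive_trunc_moment, Hs].
  auto_derive; [easy | ring].
- intros t.
  pose proof (gauss_mass_le1 s a t Hs Ha). pose proof (gauss_shift_sign s a t Hs ltac:(lra)).
  assert (0 <= 2 * t ^ 2 * (1 - gauss_mass s a t)) by (apply Rmult_le_pos; nra).
  assert (0 <= (a ^ 2 + s ^ 2) * (t * (gauss s (a - t) - gauss s (- a - t))))
    by (apply Rmult_le_pos; nra).
  nra.
Qed.

Lemma trunc_moment_sub_ge s a th : 0 < s -> 0 < a ->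
  - th ^ 2 <= trunc_moment s a th - trunc_moment s a 0.
Proof.
intros Hs Ha.
assert (0 ^ 2 + gauss_boundary s a 0 <= th ^ 2 + gauss_boundary s a th).
{ apply (min_at_0_of_deriv_sign (fun t => t ^ 2 + gauss_boundary s a t)
    (fun t => 2 * t - (s ^ 2 + a ^ 2 - t ^ 2) * (gauss s (a - t) - gauss s (- a - t)))).
  - intros t. apply (is_derive_plus (fun t => t ^ 2)); [|apply is_derive_gauss_boundary, Hs].
    auto_derive; [easy | ring].
  - intros t. pose proof (gauss_shift_diff_mul_le s a t Hs ltac:(lra)). nra. }
pose proof (gauss_mass_ge0 s a th Hs ltac:(lra)).
assert (0 <= th ^ 2 * gauss_mass s a th) by (apply Rmult_le_pos; nra).
unfold trunc_moment. lra.
Qed.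

Lemma trunc_moment_bounds s a t : 0 < s -> s <= a ->
  - s ^ 2 <= trunc_moment s a t <= a ^ 2 - s ^ 2.
Proof.
intros Hs Hsa.
pose proof (gauss_mass_ge0 s a t Hs ltac:(lra)). pose proof (gauss_mass_le1 s a t Hs ltac:(lra)).
assert (HM := is_RInt_trunc_integrand s a t Hs).
assert (Hk : forall k, is_RInt (fun y => k * normal_pdf t s y) (- a) a (k * gauss_mass s a t))
  by (intros k; apply (is_RInt_scal _ _ _ k _ (is_RInt_normal_pdf s a t))).
pose proof (pow2_ge_0 s). assert (0 <= a ^ 2 - s ^ 2) by nra.
rewrite <- (is_RInt_unique _ _ _ _ HM).
split.
- apply Rle_trans with (- s ^ 2 * gauss_mass s a t); [nra|].
  rewrite <- (is_RInt_unique _ _ _ _ (Hk _)).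
  apply RInt_le; [lra | eexists; apply Hk | eexists; exact HM |].
  intros y _. unfold trunc_integrand. pose proof (gauss_pos s (y - t) Hs).
  rewrite normal_pdf_gauss. nra.
- apply Rle_trans with ((a ^ 2 - s ^ 2) * gauss_mass s a t); [|nra].
  rewrite <- (is_RInt_unique _ _ _ _ (Hk _)).
  apply RInt_le; [lra | eexists; exact HM | eexists; apply Hk |].
  intros y Hy. unfold trunc_integrand. rewrite normal_pdf_gauss.
  assert (0 <= (a ^ 2 - y ^ 2) * gauss s (y - t))
    by (apply Rmult_le_pos; [nra | left; apply gauss_pos, Hs]).
  lra.
Qed.

Theorem lemma6 (theta sigma tau : R) (hsigma : 0 < sigma) (htau : 1 <= tau)
  (pr : Riemann_integrable (trunc_integrand theta sigma)
          (- (sigma * sqrt tau)) (sigma * sqrt tau))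
  (pr0 : Riemann_integrable (trunc_integrand 0 sigma)
          (- (sigma * sqrt tau)) (sigma * sqrt tau)) :
  Rabs (RiemannInt pr - RiemannInt pr0)
    <= Rmin (theta ^ 2) (3 * sigma ^ 2 * tau).
Proof.
set (a := sigma * sqrt tau) in *.
assert (Ha2 : a ^ 2 = sigma ^ 2 * tau)
  by (unfold a; rewrite Rpow_mult_distr, pow2_sqrt by lra; reflexivity).
assert (Hsa : sigma <= a).
{ assert (1 <= sqrt tau) by (rewrite <- sqrt_1; apply sqrt_le_1_alt; lra).
  unfold a. nra. }
rewrite <- (RInt_Reals _ _ _ pr), <- (RInt_Reals _ _ _ pr0).
rewrite (is_RInt_unique _ _ _ _ (is_RInt_trunc_integrand sigma a theta hsigma)).
rewrite (is_RInt_unique _ _ _ _ (is_RInt_trunc_integrand sigma a 0 hsigma)).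
pose proof (trunc_moment_sub_le sigma a theta hsigma ltac:(lra)).
pose proof (trunc_moment_sub_ge sigma a theta hsigma ltac:(lra)).
pose proof (trunc_moment_bounds sigma a theta hsigma Hsa).
pose proof (trunc_moment_bounds sigma a 0 hsigma Hsa).
apply Rmin_glb; apply Rabs_le; nra.
Qed.
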